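(* Let $A$ be a real $2\times 2$ matrix and $B$ a real $1\times 2$ matrix, and let $\mathrm{NT}=\{\vec{x}\in\mathbb{R}^2 : BA^k\vec{x}>0 \text{ for all integers } k\ge 0\}$. Suppose $A$ has a positive eigenvalue and has an eigenvector $\vec{\alpha}$ with $B\vec{\alpha}=0$. If there is a vector $\vec{\xi}\in\mathbb{R}^2$ with $B\vec{\xi}>0$ and $BA\vec{\xi}\le 0$, then $\mathrm{NT}=\emptyset$.
   Context: $\mathrm{NT}$ is the non-termination set of the loop ''while $(B\vec{x}>0)$ $\{\vec{x}:=A\vec{x}\}$''. *)

From HB Require Import structures.
From mathcomp Require Import all_boot all_order all_algebra.
Set Implicit Arguments. Unset Strict Implicit. Unset Printing Implicit Defensive.
Import Order.TTheory GRing.Theory Num.Theory.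
Local Open Scope ring_scope.

(* Non-termination set of "while (B x > 0) { x := A x }":
   NT = { x | B A^k x > 0 for all k >= 0 }  (B A^k x is a 1x1 matrix). *)
Definition NT (R : realFieldType) (A : 'M[R]_2) (B : 'M[R]_(1, 2)) (x : 'cV[R]_2) : Prop :=
  forall k : nat, 0 < (B *m (A ^+ k) *m x) 0 0.

Definition col_eigenvector (R : realFieldType) (A : 'M[R]_2) (alpha : 'cV[R]_2) : Prop :=
  alpha != 0 /\ exists mu : R, A *m alpha = mu *: alpha.

From HB Require Import structures.
From mathcomp Require Import all_boot all_order all_algebra.
Import Order.TTheory GRing.Theory Num.Theory.
Local Open Scope ring_scope.

(* Let alpha be an eigenvector of A with B alpha = 0, say
   A alpha = mu alpha.  Then also (B A) alpha = mu (B alpha) = 0, so the two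
   linear forms B and B A on R^2 share the nonzero kernel vector alpha; hence
   the 2x2 matrix with rows B and B A is singular.  Two linear forms on R^2
   whose matrix is singular are proportional, and the Cauchy-Binet identity
     (u x)(v y) - (u y)(v x) = det [u; v] * det [x y]
   expresses this without division: if u and v are both positive at some x,
   then v is positive wherever u is.  A point x of NT has B x > 0 and
   B A x > 0 (the cases k = 0, 1), so B A xi > 0 for every xi with B xi > 0,
   contradicting the assumed xi. *)

Lemma det_mx22 (R : comNzRingType) (M : 'M[R]_2) :
  \det M = M 0 0 * M 1 1 - M 0 1 * M 1 0.
Proof.
rewrite (expand_det_row _ 0) !big_ord_recl big_ord0 addr0 /cofactor !det_mx11.
rewrite !mxE add0n /bump /= expr0 expr1 !mul1r mulN1r mulrN.
by congr (M _ _ * M _ _ - M _ _ * M _ _); apply: val_inj.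
Qed.

Lemma pairing_det (R : comNzRingType) (u v : 'rV[R]_2) (x y : 'cV[R]_2) :
  (u *m x) 0 0 * (v *m y) 0 0 - (u *m y) 0 0 * (v *m x) 0 0
  = \det (col_mx u v : 'M_2) * \det (row_mx x y : 'M_2).
Proof.
rewrite -det_mulmx (mul_col_row u v x y) det_mx22.
have -> : (0 : 'I_(1 + 1)) = lshift 1 0 by apply: val_inj.
have -> : (1 : 'I_(1 + 1)) = rshift 1 0 by apply: val_inj.
rewrite (block_mxEul (u *m x)) (block_mxEur (u *m x)) (block_mxEdl (u *m x)).
by rewrite (block_mxEdr (u *m x)) [X in _ - X]mulrC.
Qed.

Lemma det_eq0_kernel {R : fieldType} {n} {M : 'M[R]_n} {a : 'cV[R]_n} :
  a != 0 -> M *m a = 0 -> \det M = 0.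
Proof.
move=> a_nz Ma0; rewrite -det_tr; apply/eqP/det0P.
by exists a^T; rewrite ?trmx_eq0 // -trmx_mul Ma0 trmx0.
Qed.

Lemma dependent_forms_same_sign {R : realFieldType} {u v : 'rV[R]_2}
    {x y : 'cV[R]_2} :
  \det (col_mx u v : 'M_2) = 0 ->
  0 < (u *m x) 0 0 -> 0 < (v *m x) 0 0 -> 0 < (u *m y) 0 0 ->
  0 < (v *m y) 0 0.
Proof.
move=> det_uv ux_gt0 vx_gt0 uy_gt0.
have cross : (u *m x) 0 0 * (v *m y) 0 0 = (u *m y) 0 0 * (v *m x) 0 0.
  by apply/eqP; rewrite -subr_eq0 pairing_det det_uv mul0r.
by rewrite -(pmulr_rgt0 _ ux_gt0) cross mulr_gt0.
Qed.

Lemma kernel_eigenvector_mulmx {R : comNzRingType} {m n} {B : 'M[R]_(m, n)}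
    {A : 'M[R]_n} {alpha : 'cV[R]_n} {mu : R} :
  A *m alpha = mu *: alpha -> B *m alpha = 0 -> B *m A *m alpha = 0.
Proof.
by move=> A_alpha B_alpha; rewrite -mulmxA A_alpha -scalemxAr B_alpha scaler0.
Qed.

Theorem lemma5 (R : realFieldType) (A : 'M[R]_2) (B : 'M[R]_(1, 2)) :
  (exists a : R, 0 < a /\ eigenvalue A a) ->
  (exists alpha : 'cV[R]_2, col_eigenvector A alpha /\ B *m alpha = 0) ->
  (exists xi : 'cV[R]_2, 0 < (B *m xi) 0 0 /\ (B *m A *m xi) 0 0 <= 0) ->
  forall x : 'cV[R]_2, ~ NT A B x.
Proof.
move=> _ [alpha [[alpha_nz [mu A_alpha]] B_alpha]] [xi [Bxi_gt0 BAxi_le0]].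
move=> x ntx.
have BA_alpha := kernel_eigenvector_mulmx A_alpha B_alpha.
have singular : \det (col_mx B (B *m A) : 'M_2) = 0.
  apply: (det_eq0_kernel alpha_nz).
  by rewrite (mul_col_mx B (B *m A) alpha) B_alpha BA_alpha col_mx0.
have Bx_gt0 : 0 < (B *m x) 0 0 by have := ntx 0%N; rewrite expr0 mulmx1.
have BAx_gt0 : 0 < (B *m A *m x) 0 0 by have := ntx 1%N; rewrite expr1.
have := dependent_forms_same_sign singular Bx_gt0 BAx_gt0 Bxi_gt0.
by rewrite ltNge BAxi_le0.
Qed.
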